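(* Let $G$ be a hypo-efficient domination graph that is also a vertex domination-critical graph. Then for every vertex $v\in V(G)$, the graph $G-v$ has exactly one efficient dominating set. If in addition $G$ is regular, then $G$ is a hypo-unique domination graph.
   Context: All graphs are finite, simple and undirected. For $v\in V(G)$, $N[v]$ is the closed neighborhood of $v$. A set $D\subseteq V(G)$ is dominating if every vertex of $G$ not in $D$ has a neighbor in $D$; $\gamma(G)$ is the minimum size of a dominating set, and a dominating set of size $\gamma(G)$ is a $\gamma$-set. A vertex $v$ is $\gamma$-critical if $\gamma(G-v)<\gamma(G)$; $G$ is a vertex domination-critical graph if every vertex is $\gamma$-critical. A set $D\subseteq V(H)$ is an efficient dominating set (EDS) of $H$ if $|N_H[v]\cap D|=1$ for every $v\in V(H)$. $G$ is a hypo-efficient domination graph if $G$ has no EDS but $G-v$ has at least one EDS for every $v\in V(G)$. $G$ is a hypo-unique domination graph if $G$ has at least two $\gamma$-sets but $G-v$ has exactly one $\gamma$-set for every $v\in V(G)$. *)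

From mathcomp Require Import all_boot.
Set Implicit Arguments. Unset Strict Implicit. Unset Printing Implicit Defensive.

(* Subgraphs G - v (and in general induced subgraphs G[S]) are represented
   by the vertex set S : {set T}; the edges are those of e between vertices of S. *)

Section Graphs.
Variable T : finType.
Variable e : rel T.

Definition simple_graph : Prop := symmetric e /\ irreflexive e.

Definition cnbhd (S : {set T}) (v : T) : {set T} :=
  [set u in S | (u == v) || e v u].

Definition dominating (S D : {set T}) : Prop :=
  D \subset S /\ forall x, x \in S -> x \notin D -> exists2 y, y \in D & e x y.

Definition dominatingb (S D : {set T}) : bool :=
  (D \subset S) && [forall x in S, (x \in D) || [exists y in D, e x y]].

(* domination number of G[S]: minimum size of a dominating set
   (S itself is dominating, so #|S| is a valid default) *)
Definition gamma (S : {set T}) : nat :=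
  \big[minn/#|S|]_(D : {set T} | dominatingb S D) #|D|.

Definition gamma_set (S D : {set T}) : Prop :=
  dominating S D /\ #|D| = gamma S.

Definition eds (S D : {set T}) : Prop :=
  D \subset S /\ forall v, v \in S -> #|cnbhd S v :&: D| = 1.

Definition del (v : T) : {set T} := [set: T] :\ v.

Definition gamma_critical (v : T) : Prop := gamma (del v) < gamma [set: T].

Definition vertex_domination_critical : Prop := forall v, gamma_critical v.

Definition hypo_efficient : Prop :=
  (~ exists D, eds [set: T] D) /\ (forall v, exists D, eds (del v) D).

Definition hypo_unique : Prop :=
  (exists D1 D2, D1 <> D2 /\ gamma_set [set: T] D1 /\ gamma_set [set: T] D2) /\
  (forall v, exists D, gamma_set (del v) D /\
      forall D', gamma_set (del v) D' -> D' = D).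

Definition degree (v : T) : nat := #|[set u | e v u]|.

Definition regular : Prop := exists k, forall v, degree v = k.

End Graphs.

From mathcomp Require Import all_boot zify.
Set Implicit Arguments. Unset Strict Implicit. Unset Printing Implicit Defensive.

(* An efficient dominating set D of G[S] is a γ-set of G[S]: the closed
   neighbourhoods of the vertices of D are pairwise disjoint and each of them
   meets every dominating set.  If v is critical, no vertex of an EDS of G - v
   is adjacent to v, for otherwise that set would dominate G.  Given EDSs
   D1, D2 of G - v with x ∈ D1 \ D2 and an EDS Dx of G - x, sending each vertex
   to its dominator in the other EDS yields injections D2 → Dx \ v → D1 \ x,
   so |D1| ≤ |D1| - 1; hence the EDS of G - v is unique.
   If G is k-regular, an EDS of G - v covers the n - 1 vertices of G - v by
   closed neighbourhoods of size k + 1; a γ-set of the same size must then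
   cover every vertex exactly once, i.e. it is an EDS.  Finally, for any
   EDS D_v of G - v the set v ∪ D_v is a γ-set of G, and these sets cannot
   all coincide, since otherwise G would be edgeless and V(G) would be an EDS
   of G. *)

Section Domination.
Variables (T : finType) (e : rel T).

Lemma in_del (v u : T) : (u \in del v) = (u != v).
Proof. by rewrite !inE andbT. Qed.

Lemma dominatingP S D : reflect (dominating e S D) (dominatingb e S D).
Proof.
apply: (iffP andP) => [[DS /forall_inP domD] | [DS domD]]; split=> //.
  move=> x xS xD; move: (domD x xS); rewrite (negbTE xD) /=.
  by case/exists_inP=> y; exists y.
apply/forall_inP => x xS; case: (boolP (x \in D)) => //= xD.
by have [y yD exy] := domD x xS xD; apply/exists_inP; exists y.
Qed.

Lemma dominating_cnbhd S D z : dominating e S D -> z \in S ->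
  exists2 w, w \in D & w \in cnbhd e S z.
Proof.
move=> [DS domD] zS; case: (boolP (z \in D)) => [zD | zD].
  by exists z; rewrite // !inE zS eqxx.
have [w wD ezw] := domD z zS zD.
by exists w; rewrite // !inE (subsetP DS w wD) ezw orbT.
Qed.

Lemma gamma_le_card S D : dominating e S D -> gamma e S <= #|D|.
Proof.
move/dominatingP=> domD; rewrite /gamma.
elim: (index_enum _) (mem_index_enum D) => [//|D' r IHr]; rewrite in_cons big_cons.
case/predU1P=> [<- | Dr]; first by rewrite domD geq_minl.
by case: ifP => _; rewrite ?geq_min IHr ?orbT.
Qed.

Lemma leq_gamma S m : (forall D, dominating e S D -> m <= #|D|) -> m <= gamma e S.
Proof.
move=> minD; rewrite /gamma; elim/big_ind: _ => [||D /dominatingP]; last exact: minD.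
- by apply: minD; split=> // x ->.
- by move=> a b ma mb; rewrite leq_min ma mb.
Qed.

Lemma cardsI_sum_mem (A B : {set T}) : #|A :&: B| = \sum_(d in B) (d \in A).
Proof.
rewrite -sum1_card big_mkcond [RHS]big_mkcond /=; apply: eq_bigr => d _.
by rewrite inE; case: (d \in A); case: (d \in B).
Qed.

Hypothesis e_sym : symmetric e.

Lemma cnbhd_sym (S : {set T}) (u v : T) : u \in S -> v \in S ->
  (u \in cnbhd e S v) = (v \in cnbhd e S u).
Proof. by move=> uS vS; rewrite !inE uS vS eq_sym e_sym. Qed.

Lemma eds_dominating S D : eds e S D -> dominating e S D.
Proof.
move=> [DS cardD]; split=> // x xS xD.
have /card_gt0P [y] : 0 < #|cnbhd e S x :&: D| by rewrite cardD.
rewrite !inE => /andP [/andP [_ /orP [/eqP yx | exy] yD]]; last by exists y.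
by rewrite -yx yD in xD.
Qed.

(* Each vertex is adjacent-or-equal to at most one vertex of an EDS, so choosing
   for every d in A a vertex of X in its closed neighbourhood is injective. *)
Lemma eds_card_le (S D A X : {set T}) : eds e S D -> A \subset D ->
  (forall d, d \in A -> exists2 w, w \in X & w \in cnbhd e S d) -> #|A| <= #|X|.
Proof.
move=> [DS cardD] AD reachX.
pose h d := odflt d [pick w in cnbhd e S d :&: X].
have hP d : d \in A -> h d \in cnbhd e S d :&: X.
  move=> dA; rewrite /h; case: pickP => //= noW.
  by have [w wX wN] := reachX d dA; move: (noW w); rewrite inE wN wX.
have AS d : d \in A -> d \in S by move=> dA; rewrite (subsetP DS) ?(subsetP AD).
have h_inj : {in A &, injective h}.
  move=> d1 d2 d1A d2A h12.
  have /setIP [w1 _] := hP d1 d1A; have /setIP [w2 _] := hP d2 d2A.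
  rewrite -h12 in w2; set w := h d1 in w1 w2.
  have wS : w \in S by move: w1; rewrite inE => /andP [].
  have inN d : d \in A -> w \in cnbhd e S d -> d \in cnbhd e S w :&: D.
    by move=> dA wd; rewrite inE (subsetP AD d dA) andbT cnbhd_sym // AS.
  have : #|cnbhd e S w :&: D| <= 1 by rewrite cardD.
  by move/card_le1_eqP; apply; apply: inN.
rewrite -(card_in_imset h_inj); apply/subset_leq_card/subsetP => _ /imsetP [d dA ->].
by case/setIP: (hP d dA).
Qed.

Lemma eds_gamma_set (S D : {set T}) : eds e S D -> gamma_set e S D.
Proof.
move=> edsD; have domD := eds_dominating edsD; split=> //.
apply/eqP; rewrite eqn_leq gamma_le_card // andbT; apply: leq_gamma => D' domD'.
apply: (eds_card_le edsD (subxx D)) => d dD.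
by apply: dominating_cnbhd; rewrite ?(subsetP edsD.1).
Qed.

Lemma critical_eds_nonadjacent w (E : {set T}) u :
  gamma_critical e w -> eds e (del w) E -> u \in E -> ~~ e u w.
Proof.
move=> crit_w edsE uE; apply/negP => euw.
have [[_ domE] cardE] := eds_gamma_set edsE.
suff : gamma e [set: T] <= #|E| by rewrite cardE leqNgt crit_w.
apply: gamma_le_card; split=> [|x _ xE]; first exact: subsetT.
have [->|xw] := eqVneq x w; first by exists u; rewrite // e_sym.
by apply: domE; rewrite ?in_del.
Qed.

Lemma card_eds_del_le a b (D E : {set T}) : gamma_critical e a ->
  eds e (del a) D -> eds e (del b) E -> #|D :\ b| <= #|E :\ a|.
Proof.
move=> crit_a edsD [_ cardE].
apply: (eds_card_le edsD (subD1set D b)) => d /setD1P [db dD].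
have /card_gt0P [w /setIP [wN wE]] : 0 < #|cnbhd e (del b) d :&: E|.
  by rewrite cardE ?in_del.
have da : d != a by rewrite -in_del (subsetP edsD.1).
have wa : w != a.
  move: wN; rewrite !inE => /andP [_ /predU1P [-> // | edw]].
  by apply: contraNneq _ (critical_eds_nonadjacent crit_a edsD dD) => <-.
exists w; first by rewrite !inE wa.
by move: wN; rewrite !inE wa => /andP [_ ->].
Qed.

Lemma eds_del_unique v (D1 D2 : {set T}) : vertex_domination_critical e ->
  (forall w, exists D, eds e (del w) D) ->
  eds e (del v) D1 -> eds e (del v) D2 -> D1 = D2.
Proof.
move=> crit eds_del.
suff sub D D' : eds e (del v) D -> eds e (del v) D' -> D \subset D'.
  by move=> eds1 eds2; apply/eqP; rewrite eqEsubset !sub.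
move=> edsD edsD'; apply/subsetP => x xD; apply: contraT => xD'.
have [Dx edsDx] := eds_del x.
have := leq_trans (card_eds_del_le (crit v) edsD' edsDx)
                  (card_eds_del_le (crit x) edsDx edsD).
have := (eds_gamma_set edsD).2; have := (eds_gamma_set edsD').2.
rewrite (cardsD1 x D) (cardsD1 x D') xD (negbTE xD') /=; lia.
Qed.

Lemma gamma_set_setU1_eds w (Dw : {set T}) :
  gamma_critical e w -> eds e (del w) Dw -> gamma_set e [set: T] (w |: Dw).
Proof.
move=> crit_w edsDw; have [[_ domDw] cardDw] := eds_gamma_set edsDw.
have domG : dominating e [set: T] (w |: Dw).
  split=> [|x _]; first exact: subsetT.
  rewrite !inE negb_or => /andP [xw xDw].
  have [y yD exy] : exists2 y, y \in Dw & e x y by apply: domDw; rewrite ?in_del.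
  by exists y; rewrite // !inE yD orbT.
have wDw : w \notin Dw by apply/negP => /(subsetP edsDw.1); rewrite in_del eqxx.
split=> //; apply/eqP; rewrite eqn_leq gamma_le_card // andbT.
by rewrite cardsU1 wDw add1n cardDw.
Qed.

Lemma card_cnbhd_le (S : {set T}) d : #|cnbhd e S d| <= (degree e d).+1.
Proof.
have sub : cnbhd e S d \subset d |: [set u | e d u].
  by apply/subsetP => u; rewrite !inE => /andP [_].
apply: leq_trans (subset_leq_card sub) _.
by rewrite cardsU1 /degree -add1n leq_add2r leq_b1.
Qed.

Lemma card_cnbhd_del v d : irreflexive e -> d != v -> ~~ e d v ->
  #|cnbhd e (del v) d| = (degree e d).+1.
Proof.
move=> irr dv ndv; have -> : cnbhd e (del v) d = d |: [set u | e d u].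
  apply/setP => u; rewrite !inE andbT.
  have [-> | ud] := eqVneq u d; first by rewrite dv.
  by case: (eqVneq u v) => [-> | //]; rewrite (negbTE ndv) andbF.
by rewrite cardsU1 inE irr.
Qed.

Lemma sum_card_cnbhdI (S D : {set T}) : D \subset S ->
  \sum_(z in S) #|cnbhd e S z :&: D| = \sum_(d in D) #|cnbhd e S d|.
Proof.
move=> DS; under eq_bigr do rewrite cardsI_sum_mem.
rewrite exchange_big /=; apply: eq_bigr => d dD.
rewrite -(setIidPl (_ : cnbhd e S d \subset S)) ?cardsI_sum_mem.
  by apply: eq_bigr => z zS; rewrite cnbhd_sym // (subsetP DS).
by apply/subsetP => u; rewrite !inE => /andP [].
Qed.

Lemma regular_gamma_set_eds v (D D' : {set T}) :
  irreflexive e -> gamma_critical e v -> regular e ->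
  eds e (del v) D -> gamma_set e (del v) D' -> eds e (del v) D'.
Proof.
move=> irr crit_v [k degk] edsD [domD' cardD'].
have cardD := (eds_gamma_set edsD).2.
have sumD : \sum_(d in D) #|cnbhd e (del v) d| = #|del v|.
  rewrite -(sum_card_cnbhdI edsD.1) -sum1_card.
  by apply: eq_bigr => z zS; apply: edsD.2.
have degD d : d \in D -> #|cnbhd e (del v) d| = k.+1.
  move=> dD; rewrite card_cnbhd_del ?degk ?(critical_eds_nonadjacent crit_v edsD dD) //.
  by rewrite -in_del (subsetP edsD.1).
have meetD' z : z \in del v ->
    1 <= #|cnbhd e (del v) z :&: D'| ?= iff (1 == #|cnbhd e (del v) z :&: D'|).
  move=> zS; apply: leqif_eq; have [w wD' wN] := dominating_cnbhd domD' zS.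
  by apply/card_gt0P; exists w; rewrite inE wN.
have sum_le : \sum_(z in del v) #|cnbhd e (del v) z :&: D'| <= \sum_(z in del v) 1.
  rewrite sum_card_cnbhdI ?domD'.1 // sum1_card -sumD (eq_bigr _ degD).
  rewrite sum_nat_const cardD -cardD' -sum_nat_const.
  by apply: leq_sum => d _; rewrite -(degk d) card_cnbhd_le.
split=> [|z zS]; first exact: domD'.1.
move: (geq_leqif (leqif_sum meetD')); rewrite sum_le => /esym/forall_inP allD'.
by apply/eqP; rewrite eq_sym allD'.
Qed.

Lemma edgeless_eds_setT : (forall x y, ~~ e x y) -> eds e [set: T] [set: T].
Proof.
move=> noedge; split=> // z _; apply/eqP/cards1P; exists z; apply/setP => u.
by rewrite !inE (negbTE (noedge z u)) orbF andbT.
Qed.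

Lemma eds_cover_edgeless v (D : {set T}) : irreflexive e -> gamma_critical e v ->
  eds e (del v) D -> v |: D = [set: T] -> forall x y, ~~ e x y.
Proof.
move=> irr crit_v edsD coverD.
have inD x : x != v -> x \in D.
  by move=> xv; move: (in_setT x); rewrite -coverD !inE (negbTE xv).
have nonadj_v x : ~~ e x v.
  have [-> | /inD xD] := eqVneq x v; first by rewrite irr.
  exact: critical_eds_nonadjacent crit_v edsD xD.
move=> x y; have [-> | xv] := eqVneq x v; first by rewrite e_sym nonadj_v.
have [-> | yv] := eqVneq y v; first exact: nonadj_v.
apply/negP => exy; have : #|cnbhd e (del v) x :&: D| <= 1 by rewrite edsD.2 ?in_del.
move/card_le1_eqP => /(_ x y); rewrite !inE xv yv exy eqxx !inD // orbT.
move=> /(_ isT isT) yx.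
by move: exy; rewrite yx irr.
Qed.

Lemma hypo_efficient_two_gamma_sets : irreflexive e -> hypo_efficient e ->
  vertex_domination_critical e ->
  exists D1 D2, D1 <> D2 /\ gamma_set e [set: T] D1 /\ gamma_set e [set: T] D2.
Proof.
move=> irr [noeds edsG_del] crit.
have [v0 _ | noT] := pickP (@predT T); last first.
  by case: noeds; exists set0; split=> [|v]; [exact: sub0set | have := noT v].
have [D0 edsD0] := edsG_del v0.
have [w wD0 | inD0] := pickP [pred w | w \notin v0 |: D0]; last first.
  case: noeds; exists [set: T]; apply/edgeless_eds_setT.
  apply: eds_cover_edgeless irr (crit v0) edsD0 _.
  by apply/setP => w; rewrite in_setT; move/negbFE: (inD0 w).
have [Dw edsDw] := edsG_del w.
exists (v0 |: D0), (w |: Dw); split; last by split; apply: gamma_set_setU1_eds.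
by move=> eqD; move: wD0; rewrite /= eqD setU11.
Qed.

End Domination.

Theorem theorem3p15 (T : finType) (e : rel T) :
  simple_graph e ->
  hypo_efficient e ->
  vertex_domination_critical e ->
  (forall v : T, exists D : {set T},
      eds e (del v) D /\ forall D', eds e (del v) D' -> D' = D) /\
  (regular e -> hypo_unique e).
Proof.
move=> [e_sym irr] hypoE crit.
have uniq_eds v : exists D, eds e (del v) D /\ forall D', eds e (del v) D' -> D' = D.
  have [D edsD] := hypoE.2 v; exists D; split=> // D' edsD'.
  exact: (eds_del_unique e_sym crit hypoE.2 edsD' edsD).
split=> // reg; split; first exact: hypo_efficient_two_gamma_sets.
move=> v; have [D [edsD uniqD]] := uniq_eds v.
exists D; split; first exact: eds_gamma_set.
by move=> D' /(regular_gamma_set_eds e_sym irr (crit v) reg edsD); apply: uniqD.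
Qed.
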